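(* Let $(G,r)$ be a symmetric group, $r(a,b)=({}^ab,a^b)$, with associated left brace $(G,+,\cdot)$. (1) If $(G,r)$ satisfies lri, then the brace satisfies Raut, and $({}^{({}^va)}u)({}^av)=({}^au)({}^{(a^u)}v)$ for all $a,u,v\in G$. (2) Suppose $G=G(X,r_0)$ and $r=r_G$ is the associated symmetric group of a non-degenerate symmetric set $(X,r_0)$ satisfying lri. If the brace $(G,+,\cdot)$ satisfies Raut, then $(G,r)$ satisfies lri. Consequently, for such $(X,r_0)$, $(G,r_G)$ satisfies lri if and only if $(G,+,\cdot)$ satisfies Raut.
   Context: A symmetric set is a pair $(X,r)$, $X$ nonempty, $r(x,y)=({}^xy,x^y)$ a non-degenerate, involutive bijection of $X\times X$ satisfying $r^{12}r^{23}r^{12}=r^{23}r^{12}r^{23}$ on $X^3$. Condition lri on $(X,r)$: $({}^xy)^x=y={}^x(y^x)$ for all $x,y\in X$. $G(X,r_0)$ is the group generated by $X$ with relations $xy=zt$ whenever $r_0(x,y)=(z,t)$. A symmetric group is $(G,r)$, $G$ a group, $r(u,v)=({}^uv,u^v)$ an involutive bijection of $G\times G$ with ${}^a1=1,{}^1u=u,1^u=1,a^1=a$, ${}^{ab}u={}^a({}^bu)$, $a^{uv}=(a^u)^v$, ${}^a(uv)=({}^au)({}^{a^u}v)$, $(ab)^u=(a^{{}^bu})(b^u)$, $uv=({}^uv)(u^v)$; the associated symmetric group of $(X,r_0)$ is $G(X,r_0)$ with the unique such braiding $r_G$ extending $r_0$. The associated left brace has $a+b:=a({}^{a^{-1}}b)$.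 Condition Raut on the brace: $(a+b)^c=a^c+b^c$ for all $a,b,c\in G$. Condition lri on $(G,r)$: $({}^ab)^a=b={}^a(b^a)$ for all $a,b\in G$. *)

Set Implicit Arguments.

Definition bij {A B : Type} (f : A -> B) : Prop :=
  exists g : B -> A, (forall x, g (f x) = x) /\ (forall y, f (g y) = y).

Record IsGroup {G : Type} (mul : G -> G -> G) (one : G) (inv : G -> G) : Prop := {
  g_assoc : forall a b c, mul a (mul b c) = mul (mul a b) c;
  g_mul1l : forall a, mul one a = a;
  g_mul1r : forall a, mul a one = a;
  g_mulVl : forall a, mul (inv a) a = one;
  g_mulVr : forall a, mul a (inv a) = one }.

Record Grp := {
  gcar :> Type;
  gmul : gcar -> gcar -> gcar;
  gone : gcar;
  ginv : gcar -> gcar;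
  gax : IsGroup gmul gone ginv }.

Arguments gmul {g} _ _.
Arguments gone {g}.
Arguments ginv {g} _.

Definition is_hom {G H : Grp} (phi : G -> H) : Prop :=
  forall a b : G, phi (gmul a b) = gmul (phi a) (phi b).

(** A map r(a,b) = (l a b, rr a b) given by its two components:
    l a b = {}^a b  and  rr a b = a^b. *)
Definition pairmap {X : Type} (l rr : X -> X -> X) (p : X * X) : X * X :=
  (l (fst p) (snd p), rr (fst p) (snd p)).

Definition r12 {X : Type} (r : X * X -> X * X) (p : X * X * X) : X * X * X :=
  let '(a, b, c) := p in let '(a', b') := r (a, b) in (a', b', c).
Definition r23 {X : Type} (r : X * X -> X * X) (p : X * X * X) : X * X * X :=
  let '(a, b, c) := p in let '(b', c') := r (b, c) in (a, b', c').

Definition IsSymSet {X : Type} (l rr : X -> X -> X) : Prop :=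
  inhabited X /\
  bij (pairmap l rr) /\
  (forall p, pairmap l rr (pairmap l rr p) = p) /\
  (forall x, bij (l x)) /\ (forall y, bij (fun x => rr x y)) /\
  (forall p, r12 (pairmap l rr) (r23 (pairmap l rr) (r12 (pairmap l rr) p))
           = r23 (pairmap l rr) (r12 (pairmap l rr) (r23 (pairmap l rr) p))).

Definition lri {X : Type} (l rr : X -> X -> X) : Prop :=
  forall x y, rr (l x y) x = y /\ l x (rr y x) = y.

Definition IsSymGroup {G : Grp} (l rr : G -> G -> G) : Prop :=
  bij (pairmap l rr) /\
  (forall p, pairmap l rr (pairmap l rr p) = p) /\
  (forall a : G, l a gone = gone) /\
  (forall u : G, l gone u = u) /\
  (forall u : G, rr gone u = gone) /\
  (forall a : G, rr a gone = a) /\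
  (forall a b u : G, l (gmul a b) u = l a (l b u)) /\
  (forall a u v : G, rr a (gmul u v) = rr (rr a u) v) /\
  (forall a u v : G, l a (gmul u v) = gmul (l a u) (l (rr a u) v)) /\
  (forall a b u : G, rr (gmul a b) u = gmul (rr a (l b u)) (rr b u)) /\
  (forall u v : G, gmul u v = gmul (l u v) (rr u v)).

Definition brace_add {G : Grp} (l : G -> G -> G) (a b : G) : G :=
  gmul a (l (ginv a) b).

Definition Raut {G : Grp} (l rr : G -> G -> G) : Prop :=
  forall a b c : G, rr (brace_add l a b) c = brace_add l (rr a c) (rr b c).

(** (G, iota) is the group G(X, r0) = < X | x y = z t whenever r0(x,y) = (z,t) >,
    characterised by its universal property. *)
Definition satisfies_rels {X : Type} (l rr : X -> X -> X) {H : Grp} (f : X -> H) : Prop :=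
  forall x y, gmul (f x) (f y) = gmul (f (l x y)) (f (rr x y)).

Definition IsStructureGroup {X : Type} (l rr : X -> X -> X) {G : Grp} (iota : X -> G) : Prop :=
  satisfies_rels l rr iota /\
  forall (H : Grp) (f : X -> H), satisfies_rels l rr f ->
    exists phi : G -> H, is_hom phi /\ (forall x, phi (iota x) = f x) /\
      (forall psi : G -> H, is_hom psi -> (forall x, psi (iota x) = f x) ->
         forall g, psi g = phi g).

(** Under lri the right action is [rr y x = l x^-1 y], so Raut merely says that
    every [l c] is additive, which holds in any left brace.  The second identity
    of (1) is [l a (u v) = l a u * l (rr a u) v] rewritten with the fact that
    lri makes every [l h] commute with group inversion: inversion is
    [y^-1 = -(y^y)] in the brace, and lri makes [y ↦ y^y] commute with [l h].

    For (2), [G(X,r0)] is generated by [X]; lri on [X] makes every [l g]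
    permute [X], so [X] also generates [(G,+)].  Raut makes [rr _ x] additive,
    which propagates [l x (rr y x) = y] from [y ∈ X] to all [y], and this
    equation is stable under products and inverses in [x]. *)
From Stdlib Require Import ProofIrrelevance Setoid.
Set Implicit Arguments.

Section GroupFacts.
Context {G : Grp}.
Implicit Types a b c : G.

Lemma mulA a b c : gmul a (gmul b c) = gmul (gmul a b) c.
Proof. exact (g_assoc (gax G) a b c). Qed.

Lemma mul1g a : gmul gone a = a.
Proof. exact (g_mul1l (gax G) a). Qed.

Lemma mulg1 a : gmul a gone = a.
Proof. exact (g_mul1r (gax G) a). Qed.

Lemma mulVg a : gmul (ginv a) a = gone.
Proof. exact (g_mulVl (gax G) a). Qed.

Lemma mulgV a : gmul a (ginv a) = gone.
Proof. exact (g_mulVr (gax G) a). Qed.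

Lemma mulgI a b c : gmul a b = gmul a c -> b = c.
Proof.
  intro E. rewrite <- (mul1g b), <- (mul1g c), <- (mulVg a), <- !mulA, E.
  reflexivity.
Qed.

Lemma invg_unique a b : gmul a b = gone -> b = ginv a.
Proof. intro E. apply (mulgI a). rewrite E, mulgV. reflexivity. Qed.

Lemma invgK a : ginv (ginv a) = a.
Proof. symmetry. apply invg_unique, mulVg. Qed.

Lemma invgM a b : ginv (gmul a b) = gmul (ginv b) (ginv a).
Proof.
  symmetry. apply invg_unique.
  rewrite <- mulA, (mulA b), mulgV, mul1g, mulgV. reflexivity.
Qed.

Lemma invg1 : ginv (@gone G) = gone.
Proof. symmetry. apply invg_unique, mul1g. Qed.

End GroupFacts.

Inductive subgroup_gen {X : Type} {G : Grp} (iota : X -> G) : G -> Prop :=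
| subgroup_gen_gen x : subgroup_gen iota (iota x)
| subgroup_gen_one : subgroup_gen iota gone
| subgroup_gen_mul a b :
    subgroup_gen iota a -> subgroup_gen iota b -> subgroup_gen iota (gmul a b)
| subgroup_gen_inv a : subgroup_gen iota a -> subgroup_gen iota (ginv a).

Section GeneratedSubgroup.
Variables (X : Type) (G : Grp) (iota : X -> G).

Definition gen_car : Type := {g : G | subgroup_gen iota g}.

Lemma gen_car_eq (a b : gen_car) : proj1_sig a = proj1_sig b -> a = b.
Proof.
  destruct a as [a pa], b as [b pb]; simpl; intros ->.
  f_equal. apply proof_irrelevance.
Qed.

Definition gen_mul (a b : gen_car) : gen_car :=
  exist _ (gmul (proj1_sig a) (proj1_sig b))
          (subgroup_gen_mul (proj2_sig a) (proj2_sig b)).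
Definition gen_one : gen_car := exist _ gone (subgroup_gen_one iota).
Definition gen_inv (a : gen_car) : gen_car :=
  exist _ (ginv (proj1_sig a)) (subgroup_gen_inv (proj2_sig a)).

Lemma gen_isGroup : IsGroup gen_mul gen_one gen_inv.
Proof.
  constructor; intros; apply gen_car_eq; simpl;
    auto using mulA, mul1g, mulg1, mulVg, mulgV.
Qed.

Definition gen_group : Grp := Build_Grp gen_isGroup.

(* Both the identity of [G] and the inclusion of the generated subgroup extend
   [iota], so uniqueness in the universal property forces them to agree. *)
Lemma structure_group_generated (l0 rr0 : X -> X -> X) :
  IsStructureGroup l0 rr0 iota -> forall g : G, subgroup_gen iota g.
Proof.
  intros [hrel huniv] g.
  destruct (huniv gen_group (fun x => exist _ (iota x) (subgroup_gen_gen iota x)))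
    as [phi [phi_hom [phi_iota _]]].
  { intros x y. apply gen_car_eq, hrel. }
  destruct (huniv G iota hrel) as [phi0 [_ [_ uniq]]].
  assert (id_eq : g = phi0 g) by (apply (uniq (fun g => g)); [intros a b | intro x]; reflexivity).
  assert (incl_eq : proj1_sig (phi g) = phi0 g).
  { apply (uniq (fun g => proj1_sig (phi g))).
    - intros a b. rewrite phi_hom. reflexivity.
    - intro x. rewrite phi_iota. reflexivity. }
  rewrite id_eq, <- incl_eq. apply proj2_sig.
Qed.

End GeneratedSubgroup.

Section SymmetricGroup.
Variables (G : Grp) (l rr : G -> G -> G).
Hypothesis hsym : IsSymGroup l rr.
Implicit Types a b c u v : G.

Lemma lactM a b u : l (gmul a b) u = l a (l b u).
Proof. apply hsym. Qed.

Lemma lact1g u : l gone u = u.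
Proof. apply hsym. Qed.

Lemma lactg1 a : l a gone = gone.
Proof. apply hsym. Qed.

Lemma ract1g u : rr gone u = gone.
Proof. apply hsym. Qed.

Lemma ractg1 a : rr a gone = a.
Proof. apply hsym. Qed.

Lemma ractM a u v : rr a (gmul u v) = rr (rr a u) v.
Proof. apply hsym. Qed.

Lemma lact_mulr a u v : l a (gmul u v) = gmul (l a u) (l (rr a u) v).
Proof. apply hsym. Qed.

Lemma mul_lact_ract u v : gmul u v = gmul (l u v) (rr u v).
Proof. apply hsym. Qed.

Lemma lact_invol a b : l (l a b) (rr a b) = a.
Proof.
  destruct hsym as [_ [hinvol _]].
  pose proof (hinvol (a, b)) as E. unfold pairmap in E; simpl in E.
  injection E; auto.
Qed.

Lemma lactK a u : l (ginv a) (l a u) = u.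
Proof. rewrite <- lactM, mulVg, lact1g. reflexivity. Qed.

Lemma lactVK a u : l a (l (ginv a) u) = u.
Proof. rewrite <- lactM, mulgV, lact1g. reflexivity. Qed.

Lemma mul_brace_add a b : gmul a b = brace_add l a (l a b).
Proof. unfold brace_add. rewrite lactK. reflexivity. Qed.

Lemma addg1 a : brace_add l a gone = a.
Proof. unfold brace_add. rewrite lactg1, mulg1. reflexivity. Qed.

Lemma addI a b c : brace_add l a b = brace_add l a c -> b = c.
Proof.
  unfold brace_add. intro E. apply mulgI in E.
  rewrite <- (lactVK a b), E, lactVK. reflexivity.
Qed.

(* Factoring [a (l a^-1 b) = b (rr a (l a^-1 b))], involutivity of [r]
   identifies the second factor with [l b^-1 a]. *)
Lemma addC a b : brace_add l a b = brace_add l b a.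
Proof.
  unfold brace_add. rewrite (mul_lact_ract a), lactVK. f_equal.
  pose proof (lact_invol a (l (ginv a) b)) as E. rewrite lactVK in E.
  apply (f_equal (l (ginv b))) in E. rewrite lactK in E. exact E.
Qed.

Lemma lact_add c a b :
  l c (brace_add l a b) = brace_add l (l c a) (l c b).
Proof.
  unfold brace_add. rewrite lact_mulr, <- !lactM. do 2 f_equal.
  apply (mulgI (l c a)).
  rewrite mulA, <- mul_lact_ract, <- mulA, mulgV, mulg1, mulA, mulgV, mul1g.
  reflexivity.
Qed.

Definition brace_opp a : G := l a (ginv a).

Lemma add_opp a : brace_add l a (brace_opp a) = gone.
Proof. unfold brace_add, brace_opp. rewrite lactK, mulgV. reflexivity. Qed.

Lemma add_eq1_opp a b : brace_add l a b = gone -> b = brace_opp a.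
Proof. intro E. apply (addI a). rewrite E, add_opp. reflexivity. Qed.

Lemma additive_opp {f : G -> G} :
  (forall a b, f (brace_add l a b) = brace_add l (f a) (f b)) ->
  forall a, f (brace_opp a) = brace_opp (f a).
Proof.
  intros f_add a. apply add_eq1_opp.
  assert (f1 : f gone = gone).
  { symmetry. apply (addI (f gone)).
    rewrite <- f_add, !addg1. reflexivity. }
  rewrite <- f_add, add_opp, f1. reflexivity.
Qed.

Lemma invg_opp a : ginv a = brace_opp (l (ginv a) a).
Proof.
  apply add_eq1_opp. rewrite addC.
  unfold brace_add. rewrite invgK, lactVK, mulVg. reflexivity.
Qed.

Definition lri_right (x : G) : Prop := forall y, l x (rr y x) = y.

Lemma lri_right_mul a b : lri_right a -> lri_right b -> lri_right (gmul a b).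
Proof.
  intros ha hb y. rewrite lactM, ractM, hb, ha. reflexivity.
Qed.

Lemma lri_right_inv a : lri_right a -> lri_right (ginv a).
Proof.
  intros ha y. rewrite <- (ha (rr y (ginv a))), lactK, <- ractM, mulVg, ractg1.
  reflexivity.
Qed.

Lemma lri_of_right : (forall x, lri_right x) -> lri l rr.
Proof.
  intros hright x y. split; [|apply hright].
  rewrite <- (lactK x (rr (l x y) x)), hright, lactK. reflexivity.
Qed.

Section Lri.
Hypothesis hlri : lri l rr.

Lemma ract_lri y x : rr y x = l (ginv x) y.
Proof.
  destruct (hlri x y) as [_ E]. rewrite <- E at 2. rewrite lactK. reflexivity.
Qed.

(* Apply [l a^-1 l h] to [l (l a h^-1) (rr a h^-1) = a] and use
   [l a h^-1 = a h^-1 (rr a h^-1)^-1] together with [rr a h^-1 = l h a]. *)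
Lemma ract_self_lact h a : rr (l h a) (l h a) = l h (rr a a).
Proof.
  rewrite !ract_lri.
  pose proof (lact_invol a (ginv h)) as E.
  assert (ract_h : rr a (ginv h) = l h a) by (rewrite ract_lri, invgK; reflexivity).
  assert (lact_h : l a (ginv h) = gmul (gmul a (ginv h)) (ginv (l h a))).
  { rewrite <- ract_h, (mul_lact_ract a), <- mulA, mulgV, mulg1. reflexivity. }
  rewrite lact_h, ract_h, !lactM in E.
  apply (f_equal (fun z => l h (l (ginv a) z))) in E.
  rewrite lactK, <- lactM, mulgV, lact1g in E. exact E.
Qed.

Lemma lact_invg h x : l h (ginv x) = ginv (l h x).
Proof.
  rewrite (invg_opp x), (invg_opp (l h x)).
  rewrite (additive_opp (lact_add h)), <- !ract_lri, ract_self_lact.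
  reflexivity.
Qed.

Lemma raut_of_lri : Raut l rr.
Proof. intros a b c. rewrite !ract_lri. apply lact_add. Qed.

Lemma lact_mul_swap a u v :
  gmul (l (l v a) u) (l a v) = gmul (l a u) (l (rr a u) v).
Proof.
  rewrite <- lact_mulr, <- (invgK (gmul u v)), invgM, lact_invg, lact_mulr.
  rewrite !lact_invg, (ract_lri a (ginv v)), invgK, invgM, !invgK.
  reflexivity.
Qed.

End Lri.

Section StructureGroup.
Variables (X : Type) (l0 rr0 : X -> X -> X) (iota : X -> G).
Hypothesis hlri0 : lri l0 rr0.
Hypothesis hstruct : IsStructureGroup l0 rr0 iota.
Hypothesis hiota : forall x y, l (iota x) (iota y) = iota (l0 x y) /\
                               rr (iota x) (iota y) = iota (rr0 x y).

Inductive add_gen : G -> Prop :=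
| add_gen_gen x : add_gen (iota x)
| add_gen_one : add_gen gone
| add_gen_add a b : add_gen a -> add_gen b -> add_gen (brace_add l a b)
| add_gen_opp a : add_gen a -> add_gen (brace_opp a).

Definition stable_image (g : G) : Prop := forall x, exists y, l g (iota x) = iota y.

Lemma lact_iota x y : l (iota x) (iota y) = iota (l0 x y).
Proof. apply hiota. Qed.

Lemma ract_iota x y : rr (iota x) (iota y) = iota (rr0 x y).
Proof. apply hiota. Qed.

Lemma lactV_iota z x : l (ginv (iota z)) (iota x) = iota (rr0 x z).
Proof.
  destruct (hlri0 z x) as [_ E].
  rewrite <- E at 1. rewrite <- lact_iota, lactK. reflexivity.
Qed.

Lemma stable_image_gen g :
  subgroup_gen iota g -> stable_image g /\ stable_image (ginv g).
Proof.
  induction 1 as [z| |a b _ [IHa IHaV] _ [IHb IHbV]|a _ [IHa IHaV]].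
  - split; intro x.
    + exists (l0 z x). apply lact_iota.
    + exists (rr0 x z). apply lactV_iota.
  - rewrite invg1. split; intro x; exists x; apply lact1g.
  - split; intro x.
    + destruct (IHb x) as [y Ey]. destruct (IHa y) as [z Ez].
      exists z. rewrite lactM, Ey, Ez. reflexivity.
    + destruct (IHaV x) as [y Ey]. destruct (IHbV y) as [z Ez].
      exists z. rewrite invgM, lactM, Ey, Ez. reflexivity.
  - rewrite invgK. split; assumption.
Qed.

Lemma add_gen_lact h a : add_gen a -> add_gen (l h a).
Proof.
  induction 1 as [x| |a b _ IHa _ IHb|a _ IHa].
  - destruct (proj1 (stable_image_gen (structure_group_generated hstruct h)) x)
      as [y ->].
    constructor.
  - rewrite lactg1. constructor.
  - rewrite lact_add. constructor; assumption.
  - rewrite (additive_opp (lact_add h)). constructor; assumption.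
Qed.

Lemma add_gen_all g : add_gen g.
Proof.
  induction (structure_group_generated hstruct g) as [x| |a b _ IHa _ IHb|a _ IHa].
  - constructor.
  - constructor.
  - rewrite mul_brace_add. constructor; [|apply add_gen_lact]; assumption.
  - rewrite <- (lactK a (ginv a)). apply add_gen_lact. constructor. assumption.
Qed.

Section Raut.
Hypothesis hraut : Raut l rr.

Lemma ract_add c a b :
  rr (brace_add l a b) c = brace_add l (rr a c) (rr b c).
Proof. apply hraut. Qed.

Lemma lri_right_iota x : lri_right (iota x).
Proof.
  intro y. induction (add_gen_all y) as [z| |a b _ IHa _ IHb|a _ IHa].
  - rewrite ract_iota, lact_iota. f_equal. apply hlri0.
  - rewrite ract1g, lactg1. reflexivity.
  - rewrite ract_add, lact_add, IHa, IHb. reflexivity.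
  - rewrite (additive_opp (ract_add (iota x))), (additive_opp (lact_add _)), IHa.
    reflexivity.
Qed.

Lemma lri_of_raut : lri l rr.
Proof.
  apply lri_of_right. intro g.
  induction (structure_group_generated hstruct g).
  - apply lri_right_iota.
  - intro y. rewrite ractg1, lact1g. reflexivity.
  - apply lri_right_mul; assumption.
  - apply lri_right_inv; assumption.
Qed.

End Raut.
End StructureGroup.
End SymmetricGroup.

Theorem mainTheorem13 :
  (* (1) *)
  (forall (G : Grp) (l rr : G -> G -> G),
     IsSymGroup l rr -> lri l rr ->
     Raut l rr /\
     (forall a u v : G,
        gmul (l (l v a) u) (l a v) = gmul (l a u) (l (rr a u) v))) /\
  (* (2) *)
  (forall (X : Type) (l0 rr0 : X -> X -> X) (G : Grp) (iota : X -> G)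
          (l rr : G -> G -> G),
     IsSymSet l0 rr0 -> lri l0 rr0 ->
     IsStructureGroup l0 rr0 iota ->
     IsSymGroup l rr ->
     (forall x y : X, l (iota x) (iota y) = iota (l0 x y) /\
                      rr (iota x) (iota y) = iota (rr0 x y)) ->
     (Raut l rr -> lri l rr) /\ (lri l rr <-> Raut l rr)).
Proof.
  split.
  - intros G l rr hsym hlri.
    split; [apply raut_of_lri | apply lact_mul_swap]; assumption.
  - intros X l0 rr0 G iota l rr _ hlri0 hstruct hsym hiota.
    assert (lri_raut : Raut l rr -> lri l rr) by exact (lri_of_raut hsym hlri0 hstruct hiota).
    split; [exact lri_raut | split; [exact (raut_of_lri hsym) | exact lri_raut]].
Qed.
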